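(* Let $A$ be a nonempty finite set, $\Sigma\in\mathbb{R}$, and let $\sigma$ be a $\Sigma$-proximity on $A$. Then for all $x,y\in A$: $\sigma(x,y)=\sigma(y,x)$ (symmetry), and if $x\ne y$ then $\sigma(x,x)>\sigma(x,y)$ (egocentrism).
   Context: For a nonempty finite set $A$ and a real number $\Sigma$, a function $\sigma:A^2\to\mathbb{R}$ is called a $\Sigma$-proximity on $A$ if for all $x,y,z\in A$: (1) (normalization) $\sum_{t\in A}\sigma(x,t)=\Sigma$; (2) (triangle inequality) $\sigma(x,y)+\sigma(x,z)-\sigma(y,z)\le\sigma(x,x)$, and this inequality is strict whenever $z=y$ and $x\ne y$. *)

From mathcomp Require Import all_boot all_order all_algebra.
Set Implicit Arguments. Unset Strict Implicit. Unset Printing Implicit Defensive.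
Import Order.TTheory GRing.Theory Num.Theory.
Local Open Scope ring_scope.

Definition is_proximity (R : realFieldType) (A : finType) (Sigma : R)
    (sigma : A -> A -> R) : Prop :=
  (forall x : A, \sum_(t : A) sigma x t = Sigma) /\
  (forall x y z : A, sigma x y + sigma x z - sigma y z <= sigma x x) /\
  (forall x y : A, x != y -> sigma x y + sigma x y - sigma y y < sigma x x).

(* Taking z = x in the triangle inequality gives sigma(x,y) <= sigma(y,x), hence
   symmetry.  For egocentrism fix x <> y and consider the gaps
   g(t) = sigma(x,x) - sigma(x,y) - sigma(x,t) + sigma(y,t): by the (symmetric)
   triangle inequality they are nonnegative, and by its strict form g(y) > 0.
   Since rows x and y have the same sum, the gaps add up to
   |A| (sigma(x,x) - sigma(x,y)), which is therefore positive. *)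

From mathcomp Require Import all_boot all_order all_algebra.
From mathcomp Require Import lra.
Import Order.TTheory GRing.Theory Num.Theory.
Local Open Scope ring_scope.

Section Proximity.

Variables (R : realFieldType) (A : finType) (sigma : A -> A -> R).

Hypothesis triangle :
  forall x y z : A, sigma x y + sigma x z - sigma y z <= sigma x x.

Lemma proximity_sym (x y : A) : sigma x y = sigma y x.
Proof.
have := triangle x y x; have := triangle y x y.
by move=> le_yx le_xy; apply/eqP; rewrite eq_le; apply/andP; split; lra.
Qed.

Definition proximity_gap (x y t : A) : R :=
  sigma x x - sigma x y - sigma x t + sigma y t.

Lemma proximity_gap_ge0 (x y t : A) : 0 <= proximity_gap x y t.
Proof. by have := triangle x y t; rewrite /proximity_gap (proximity_sym y t); lra. Qed.

Lemma sum_proximity_gap (x y : A) :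
    \sum_(t : A) sigma x t = \sum_(t : A) sigma y t ->
  \sum_(t : A) proximity_gap x y t = (sigma x x - sigma x y) *+ #|A|.
Proof.
move=> eq_rows; rewrite /proximity_gap big_split /= sumrB eq_rows.
by rewrite sumr_const subrK.
Qed.

Lemma proximity_egocentric (x y : A) :
    \sum_(t : A) sigma x t = \sum_(t : A) sigma y t ->
    sigma x y + sigma x y - sigma y y < sigma x x ->
  sigma x y < sigma x x.
Proof.
move=> eq_rows strict_xy.
have gap_y_gt0 : 0 < proximity_gap x y y by rewrite /proximity_gap; lra.
have : 0 < \sum_(t : A) proximity_gap x y t.
  rewrite (bigD1 y) //=; apply: ltr_wpDr gap_y_gt0.
  by apply: sumr_ge0 => t _; apply: proximity_gap_ge0.
rewrite sum_proximity_gap // pmulrn_lgt0 ?subr_gt0 //.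
by apply/card_gt0P; exists y.
Qed.

End Proximity.

Theorem proposition1 (R : realFieldType) (A : finType) (a0 : A) (Sigma : R)
    (sigma : A -> A -> R) :
  is_proximity Sigma sigma ->
  forall x y : A, sigma x y = sigma y x /\ (x != y -> sigma x y < sigma x x).
Proof.
move=> [row_sum [triangle strict]] x y; split; first exact: proximity_sym.
move=> neq_xy; apply: proximity_egocentric (strict x y neq_xy) => //.
by rewrite !row_sum.
Qed.
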